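(* For every type theory $\mathcal T$ and $\mathcal R\in\{\equiv,=_\beta,=_{\beta\eta}\}$: if $B\vdash^{\mathcal T}_{\mathcal R}\Delta:\sigma$, then $\Delta$ is strongly normalizing with respect to $\to$, i.e. there is no infinite reduction sequence $\Delta\to\Delta_1\to\Delta_2\to\cdots$.
   Context: Type atoms: a set $\mathbb{A}$ of symbols; $\omega$ denotes a distinguished atom (the universal type). Intersection types over $\mathbb A$: $\sigma::= a\mid\sigma\to\sigma\mid\sigma\cap\sigma$ ($a\in\mathbb A$). An intersection type theory $\mathcal T$ over $\mathbb A$ is a set of inequalities $\sigma\le\tau$ (written $\sigma\le_{\mathcal T}\tau$) closed under (refl) $\sigma\le\sigma$; (incl) $\sigma\cap\tau\le\sigma$ and $\sigma\cap\tau\le\tau$; (glb) $\rho\le\sigma$ and $\rho\le\tau$ imply $\rho\le\sigma\cap\tau$; (trans) $\sigma\le\tau$ and $\tau\le\rho$ imply $\sigma\le\rho$. $\Delta$-terms: $\Delta::=u_\Delta\mid x\mid\lambda x{:}\sigma.\Delta\mid\Delta\,\Delta\mid\langle\Delta,\Delta\rangle\mid pr_1\Delta\mid pr_2\Delta\mid\Delta^\sigma$, where for every (not necessarily typable) $\Delta$-term $\Delta$ there is a constant $u_\Delta$. The essence $\|\Delta\|$ is the pure $\lambda$-term defined by $\|x\|=x$, $\|u_\Delta\|=\|\Delta\|$, $\|\Delta^\sigma\|=\|\Delta\|$, $\|\lambda x{:}\sigma.\Delta\|=\lambda x.\|\Delta\|$, $\|\Delta_1\Delta_2\|=\|\Delta_1\|\,\|\Delta_2\|$,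 $\|\langle\Delta_1,\Delta_2\rangle\|=\|\Delta_1\|$, $\|pr_i\Delta\|=\|\Delta\|$. Let $\mathcal R$ be one of $\equiv$ (syntactic identity up to $\alpha$), $=_\beta$, $=_{\beta\eta}$ on pure $\lambda$-terms. A basis $B$ is a finite set of declarations $x{:}\sigma$ with distinct variables. The typed system $\Delta^{\mathcal T}_{\mathcal R}$ derives $B\vdash^{\mathcal T}_{\mathcal R}\Delta:\sigma$ by: (top) $B\vdash u_\Delta:\omega$ if $\omega\in\mathbb A$; (ax) $B\vdash x:\sigma$ if $x{:}\sigma\in B$; ($\to$I) from $B,x{:}\sigma\vdash\Delta:\tau$ infer $B\vdash\lambda x{:}\sigma.\Delta:\sigma\to\tau$; ($\to$E) from $B\vdash\Delta_1:\sigma\to\tau$ and $B\vdash\Delta_2:\sigma$ infer $B\vdash\Delta_1\Delta_2:\tau$; ($\cap$I) from $B\vdash\Delta_1:\sigma$, $B\vdash\Delta_2:\tau$ and $\|\Delta_1\|\mathrel{\mathcal R}\|\Delta_2\|$ infer $B\vdash\langle\Delta_1,\Delta_2\rangle:\sigma\cap\tau$; ($\cap$E$_1$) from $B\vdash\Delta:\sigma\cap\tau$ infer $B\vdash pr_1\Delta:\sigma$; ($\cap$E$_2$) from $B\vdash\Delta:\sigma\cap\tau$ infer $B\vdash pr_2\Delta:\tau$; ($\le_{\mathcal T}$) from $B\vdash\Delta:\sigma$ and $\sigma\le_{\mathcal T}\tau$ infer $B\vdash\Delta^\tau:\tau$. Substitution $\Delta_1[\Delta_2/x]$ is capture-avoiding,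 with $u_{\Delta_1}[\Delta_2/x]=u_{\Delta_1[\Delta_2/x]}$ and $(\Delta_1^\sigma)[\Delta_2/x]=(\Delta_1[\Delta_2/x])^\sigma$. Notions of reduction: $(\beta)$ $(\lambda x{:}\sigma.\Delta_1)\Delta_2\to\Delta_1[\Delta_2/x]$; $(pr_i)$ $pr_i\langle\Delta_1,\Delta_2\rangle\to\Delta_i$ ($i=1,2$). ($(\lambda x{:}\sigma.\Delta_1)^\tau\Delta_2$ is not a redex.) $\to$ denotes the contextual closure of $(\beta)$ and $(pr_i)$, where no reduction is performed inside the index $\Delta$ of a constant $u_\Delta$. *)

(* Terms use de Bruijn indices (alpha-equivalence = equality). *)
From Stdlib Require Import List Relations Arith.
Import ListNotations.

Section Types.
Variable Atom : Type.

Inductive typ : Type :=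
| TAtom : Atom -> typ
| TArr : typ -> typ -> typ
| TInt : typ -> typ -> typ.
End Types.
Arguments TAtom {Atom} _.
Arguments TArr {Atom} _ _.
Arguments TInt {Atom} _ _.

Definition is_type_theory {Atom : Type} (le : typ Atom -> typ Atom -> Prop) : Prop :=
  (forall s, le s s) /\
  (forall s t, le (TInt s t) s) /\
  (forall s t, le (TInt s t) t) /\
  (forall r s t, le r s -> le r t -> le r (TInt s t)) /\
  (forall s t r, le s t -> le t r -> le s r).

Inductive lterm : Type :=
| LVar : nat -> lterm
| LLam : lterm -> lterm
| LApp : lterm -> lterm -> lterm.

Fixpoint llift (k c : nat) (t : lterm) : lterm :=
  match t with
  | LVar n => if Nat.ltb n c then LVar n else LVar (n + k)
  | LLam b => LLam (llift k (S c) b)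
  | LApp a b => LApp (llift k c a) (llift k c b)
  end.

Fixpoint lsubst (t : lterm) (n : nat) (s : lterm) : lterm :=
  match t with
  | LVar m =>
      match Nat.compare m n with
      | Lt => LVar m
      | Eq => llift n 0 s
      | Gt => LVar (pred m)
      end
  | LLam b => LLam (lsubst b (S n) s)
  | LApp a b => LApp (lsubst a n s) (lsubst b n s)
  end.

Inductive lbeta : lterm -> lterm -> Prop :=
| lbeta_redex : forall b a, lbeta (LApp (LLam b) a) (lsubst b 0 a)
| lbeta_lam : forall b b', lbeta b b' -> lbeta (LLam b) (LLam b')
| lbeta_appl : forall a a' b, lbeta a a' -> lbeta (LApp a b) (LApp a' b)
| lbeta_appr : forall a b b', lbeta b b' -> lbeta (LApp a b) (LApp a b').

(* one-step beta-eta (contextual closure); eta: \x. t x -> t, x not free in t *)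
Inductive lbetaeta : lterm -> lterm -> Prop :=
| lbe_beta : forall b a, lbetaeta (LApp (LLam b) a) (lsubst b 0 a)
| lbe_eta : forall t, lbetaeta (LLam (LApp (llift 1 0 t) (LVar 0))) t
| lbe_lam : forall b b', lbetaeta b b' -> lbetaeta (LLam b) (LLam b')
| lbe_appl : forall a a' b, lbetaeta a a' -> lbetaeta (LApp a b) (LApp a' b)
| lbe_appr : forall a b b', lbetaeta b b' -> lbetaeta (LApp a b) (LApp a b').

Inductive Rchoice : Type := RSyn | RBeta | RBetaEta.

Definition Rrel (R : Rchoice) : lterm -> lterm -> Prop :=
  match R with
  | RSyn => fun t u => t = u
  | RBeta => clos_refl_sym_trans lterm lbeta
  | RBetaEta => clos_refl_sym_trans lterm lbetaeta
  end.

Section Delta.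
Variable Atom : Type.

Inductive dterm : Type :=
| DU : dterm -> dterm                 (* constant u_Delta *)
| DVar : nat -> dterm
| DLam : typ Atom -> dterm -> dterm
| DApp : dterm -> dterm -> dterm
| DPair : dterm -> dterm -> dterm
| DPr1 : dterm -> dterm
| DPr2 : dterm -> dterm
| DCoe : dterm -> typ Atom -> dterm.

Fixpoint essence (d : dterm) : lterm :=
  match d with
  | DU d => essence d
  | DVar n => LVar n
  | DLam _ b => LLam (essence b)
  | DApp a b => LApp (essence a) (essence b)
  | DPair a _ => essence a
  | DPr1 a => essence a
  | DPr2 a => essence a
  | DCoe a _ => essence a
  end.

Fixpoint dlift (k c : nat) (t : dterm) : dterm :=
  match t with
  | DU d => DU (dlift k c d)
  | DVar n => if Nat.ltb n c then DVar n else DVar (n + k)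
  | DLam s b => DLam s (dlift k (S c) b)
  | DApp a b => DApp (dlift k c a) (dlift k c b)
  | DPair a b => DPair (dlift k c a) (dlift k c b)
  | DPr1 a => DPr1 (dlift k c a)
  | DPr2 a => DPr2 (dlift k c a)
  | DCoe a s => DCoe (dlift k c a) s
  end.

Fixpoint dsubst (t : dterm) (n : nat) (s : dterm) : dterm :=
  match t with
  | DU d => DU (dsubst d n s)
  | DVar m =>
      match Nat.compare m n with
      | Lt => DVar m
      | Eq => dlift n 0 s
      | Gt => DVar (pred m)
      end
  | DLam sg b => DLam sg (dsubst b (S n) s)
  | DApp a b => DApp (dsubst a n s) (dsubst b n s)
  | DPair a b => DPair (dsubst a n s) (dsubst b n s)
  | DPr1 a => DPr1 (dsubst a n s)
  | DPr2 a => DPr2 (dsubst a n s)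
  | DCoe a sg => DCoe (dsubst a n s) sg
  end.

(* one-step reduction: contextual closure of (beta), (pr1), (pr2),
   never reducing inside the index of a constant u_Delta *)
Inductive dred : dterm -> dterm -> Prop :=
| dred_beta : forall s b a, dred (DApp (DLam s b) a) (dsubst b 0 a)
| dred_pr1 : forall a b, dred (DPr1 (DPair a b)) a
| dred_pr2 : forall a b, dred (DPr2 (DPair a b)) b
| dred_lam : forall s b b', dred b b' -> dred (DLam s b) (DLam s b')
| dred_appl : forall a a' b, dred a a' -> dred (DApp a b) (DApp a' b)
| dred_appr : forall a b b', dred b b' -> dred (DApp a b) (DApp a b')
| dred_pairl : forall a a' b, dred a a' -> dred (DPair a b) (DPair a' b)
| dred_pairr : forall a b b', dred b b' -> dred (DPair a b) (DPair a b')
| dred_pr1c : forall a a', dred a a' -> dred (DPr1 a) (DPr1 a')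
| dred_pr2c : forall a a', dred a a' -> dred (DPr2 a) (DPr2 a')
| dred_coe : forall a a' s, dred a a' -> dred (DCoe a s) (DCoe a' s).

Definition strongly_normalizing (d : dterm) : Prop :=
  ~ exists f : nat -> dterm, f 0 = d /\ forall n, dred (f n) (f (S n)).

(* Typing. [omega = Some w] means the distinguished atom w = omega belongs
   to the atom set; [omega = None] means omega is not in the atom set.
   A basis is a list of types: de Bruijn index n is declared with type
   [nth n B] when n < length B. *)
Inductive typed (omega : option Atom) (le : typ Atom -> typ Atom -> Prop)
          (R : Rchoice) : list (typ Atom) -> dterm -> typ Atom -> Prop :=
| ty_top : forall B d w, omega = Some w -> typed omega le R B (DU d) (TAtom w)
| ty_ax : forall B n s, nth_error B n = Some s -> typed omega le R B (DVar n) s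
| ty_lam : forall B s b t, typed omega le R (s :: B) b t ->
           typed omega le R B (DLam s b) (TArr s t)
| ty_app : forall B a b s t, typed omega le R B a (TArr s t) ->
           typed omega le R B b s -> typed omega le R B (DApp a b) t
| ty_pair : forall B a b s t, typed omega le R B a s -> typed omega le R B b t ->
           Rrel R (essence a) (essence b) ->
           typed omega le R B (DPair a b) (TInt s t)
| ty_pr1 : forall B a s t, typed omega le R B a (TInt s t) ->
           typed omega le R B (DPr1 a) s
| ty_pr2 : forall B a s t, typed omega le R B a (TInt s t) ->
           typed omega le R B (DPr2 a) t
| ty_le : forall B a s t, typed omega le R B a s -> le s t ->
           typed omega le R B (DCoe a t) t.

End Delta.
Arguments DU {Atom} _.
Arguments DVar {Atom} _.
Arguments DLam {Atom} _ _.
Arguments DApp {Atom} _ _.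
Arguments DPair {Atom} _ _.
Arguments DPr1 {Atom} _.
Arguments DPr2 {Atom} _.
Arguments DCoe {Atom} _ _.
Arguments essence {Atom} _.
Arguments dlift {Atom} _ _ _.
Arguments dsubst {Atom} _ _ _.
Arguments dred {Atom} _ _.
Arguments strongly_normalizing {Atom} _.
Arguments typed {Atom} _ _ _ _ _ _.

(* Tait–Girard reducibility.  Every type T is interpreted as a reducibility
   candidate [Red T]: a set of strongly normalising terms closed under
   reduction and containing every neutral term all of whose one-step reducts
   are in it.  Arrows and intersections are interpreted by the function space
   and by reducibility of both projections.  A well-typed term, closed by a
   substitution of reducible terms, is reducible; the identity substitution is
   reducible, so typed terms are strongly normalising.  Neither the type
   theory nor the relation R matters: a coercion [a^s] is neutral (it never
   takes part in a redex). *)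
From Stdlib Require Import List Relations Arith Lia.

Section StrongNormalization.
Variable Atom : Type.
Notation tm := (dterm Atom).
Notation ty := (typ Atom).

Definition up_ren (xi : nat -> nat) (n : nat) : nat :=
  match n with 0 => 0 | S m => S (xi m) end.

Fixpoint ren (xi : nat -> nat) (t : tm) : tm :=
  match t with
  | DU d => DU (ren xi d)
  | DVar n => DVar (xi n)
  | DLam s b => DLam s (ren (up_ren xi) b)
  | DApp a b => DApp (ren xi a) (ren xi b)
  | DPair a b => DPair (ren xi a) (ren xi b)
  | DPr1 a => DPr1 (ren xi a)
  | DPr2 a => DPr2 (ren xi a)
  | DCoe a s => DCoe (ren xi a) s
  end.

Definition up_subst (sg : nat -> tm) (n : nat) : tm :=
  match n with 0 => DVar 0 | S m => ren S (sg m) end.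

Fixpoint subst (sg : nat -> tm) (t : tm) : tm :=
  match t with
  | DU d => DU (subst sg d)
  | DVar n => sg n
  | DLam s b => DLam s (subst (up_subst sg) b)
  | DApp a b => DApp (subst sg a) (subst sg b)
  | DPair a b => DPair (subst sg a) (subst sg b)
  | DPr1 a => DPr1 (subst sg a)
  | DPr2 a => DPr2 (subst sg a)
  | DCoe a s => DCoe (subst sg a) s
  end.

Definition scons (a : tm) (sg : nat -> tm) (n : nat) : tm :=
  match n with 0 => a | S m => sg m end.

Lemma ren_ext t xi zeta : (forall n, xi n = zeta n) -> ren xi t = ren zeta t.
Proof.
  revert xi zeta; induction t; intros xi zeta H; simpl; f_equal; auto.
  apply IHt; intros [|n]; simpl; auto.
Qed.

Lemma ren_id t : ren (fun n => n) t = t.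
Proof.
  induction t; simpl; f_equal; auto.
  rewrite <- IHt at 2; apply ren_ext; intros [|n]; reflexivity.
Qed.

Lemma ren_ren t xi zeta : ren xi (ren zeta t) = ren (fun n => xi (zeta n)) t.
Proof.
  revert xi zeta; induction t; intros xi zeta; simpl; f_equal; auto.
  rewrite IHt; apply ren_ext; intros [|n]; reflexivity.
Qed.

Lemma subst_ext t sg1 sg2 : (forall n, sg1 n = sg2 n) -> subst sg1 t = subst sg2 t.
Proof.
  revert sg1 sg2; induction t; intros sg1 sg2 H; simpl; f_equal; auto.
  apply IHt; intros [|n]; simpl; f_equal; auto.
Qed.

Lemma subst_ren t sg xi : subst sg (ren xi t) = subst (fun n => sg (xi n)) t.
Proof.
  revert sg xi; induction t; intros sg xi; simpl; f_equal; auto.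
  rewrite IHt; apply subst_ext; intros [|n]; reflexivity.
Qed.

Lemma ren_subst t sg xi : ren xi (subst sg t) = subst (fun n => ren xi (sg n)) t.
Proof.
  revert sg xi; induction t; intros sg xi; simpl; f_equal; auto.
  rewrite IHt; apply subst_ext; intros [|n]; simpl; auto.
  rewrite !ren_ren; apply ren_ext; reflexivity.
Qed.

Lemma subst_subst t sg1 sg2 :
  subst sg1 (subst sg2 t) = subst (fun n => subst sg1 (sg2 n)) t.
Proof.
  revert sg1 sg2; induction t; intros sg1 sg2; simpl; f_equal; auto.
  rewrite IHt; apply subst_ext; intros [|n]; simpl; auto.
  rewrite subst_ren, ren_subst; apply subst_ext; reflexivity.
Qed.

Lemma subst_id t : subst (@DVar Atom) t = t.
Proof.
  induction t; simpl; f_equal; auto.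
  rewrite <- IHt at 2; apply subst_ext; intros [|n]; reflexivity.
Qed.

Lemma dlift_ren t k c :
  dlift k c t = ren (fun n => if Nat.ltb n c then n else n + k) t.
Proof.
  revert c; induction t; intros c; simpl; try (f_equal; auto; fail).
  - destruct (Nat.ltb n c); reflexivity.
  - f_equal; rewrite IHt; apply ren_ext; intros [|n]; simpl; auto.
    change (S n <? S c) with (n <? c); destruct (n <? c); reflexivity.
Qed.

Lemma dlift_0 (a : tm) : dlift 0 0 a = a.
Proof.
  rewrite dlift_ren; rewrite <- (ren_id a) at 2; apply ren_ext; intro n; simpl; lia.
Qed.

Definition dsubst_fun (n : nat) (s : tm) (m : nat) : tm :=
  match Nat.compare m n with
  | Lt => DVar m
  | Eq => dlift n 0 s
  | Gt => DVar (pred m)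
  end.

Lemma dsubst_subst t n s : dsubst t n s = subst (dsubst_fun n s) t.
Proof.
  revert n; induction t; intros k; simpl; f_equal; auto.
  rewrite IHt; apply subst_ext; intros [|m]; unfold dsubst_fun; simpl; auto.
  destruct (Nat.compare m k) eqn:E; simpl; auto.
  - rewrite !dlift_ren, ren_ren; apply ren_ext; intro x; simpl; lia.
  - apply Nat.compare_gt_iff in E; destruct m; [lia | reflexivity].
Qed.

Lemma dsubst0_scons b a : dsubst b 0 a = subst (scons a (@DVar Atom)) b.
Proof.
  rewrite dsubst_subst; apply subst_ext; intros [|n]; unfold dsubst_fun; simpl; auto.
  apply dlift_0.
Qed.

Lemma dsubst0_up_subst t sg a :
  dsubst (subst (up_subst sg) t) 0 a = subst (scons a sg) t.
Proof.
  rewrite dsubst0_scons, subst_subst; apply subst_ext; intros [|n]; simpl; auto.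
  rewrite subst_ren; rewrite <- (subst_id (sg n)) at 2; apply subst_ext; reflexivity.
Qed.

Lemma dred_subst t t' sg : dred t t' -> dred (subst sg t) (subst sg t').
Proof.
  intro H; revert sg; induction H; intro sg; simpl; try (constructor; auto; fail).
  replace (subst sg (dsubst b 0 a))
    with (dsubst (subst (up_subst sg) b) 0 (subst sg a)) by
    (rewrite dsubst0_up_subst, dsubst0_scons, subst_subst;
     apply subst_ext; intros [|n]; reflexivity).
  constructor.
Qed.

Definition SN : tm -> Prop := Acc (fun u t => dred t u).

Lemma SN_strongly_normalizing t : SN t -> strongly_normalizing t.
Proof.
  intros H [f [Hf0 Hf]]; revert f Hf0 Hf.
  induction H as [t _ IH]; intros f Hf0 Hf; subst t.
  apply (IH (f 1) (Hf 0) (fun n => f (S n))); auto.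
Qed.

Lemma SN_preimage (f : tm -> tm) t :
  (forall u u', dred u u' -> dred (f u) (f u')) -> SN (f t) -> SN t.
Proof.
  intros Hf H; remember (f t) as v eqn:Ev; revert t Ev.
  induction H as [v _ IH]; intros t Ev; subst v.
  constructor; intros u Hu; exact (IH _ (Hf _ _ Hu) u eq_refl).
Qed.

(* Terms that create no new redex when applied or projected. *)
Definition neutral (t : tm) : Prop :=
  match t with DLam _ _ | DPair _ _ => False | _ => True end.

Record candidate (P : tm -> Prop) : Prop := {
  candidate_SN : forall t, P t -> SN t;
  candidate_dred : forall t t', P t -> dred t t' -> P t';
  candidate_neutral : forall t, neutral t -> (forall t', dred t t' -> P t') -> P t
}.

Lemma candidate_var P n : candidate P -> P (DVar n).
Proof.
  intro HP; apply (candidate_neutral P HP); [exact I|].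
  intros t' Hr; inversion Hr.
Qed.

Lemma candidate_SN_set : candidate SN.
Proof.
  split; auto.
  - intros t t' [Ht] Hr; exact (Ht t' Hr).
  - intros t _ Ht; constructor; exact Ht.
Qed.

Lemma candidate_arrow P Q :
  candidate P -> candidate Q -> candidate (fun t => forall u, P u -> Q (DApp t u)).
Proof.
  intros HP HQ; split.
  - intros t Ht.
    apply (SN_preimage (fun t => DApp t (DVar 0))); [intros; constructor; auto|].
    exact (candidate_SN Q HQ _ (Ht _ (candidate_var P 0 HP))).
  - intros t t' Ht Hr u Hu.
    apply (candidate_dred Q HQ (DApp t u)); [auto | constructor; auto].
  - intros t Hn Ht u Hu.
    pose proof (candidate_SN P HP u Hu) as Hsu; revert Hu.
    induction Hsu as [u _ IHu]; intro Hu.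
    apply (candidate_neutral Q HQ); [exact I|].
    intros x Hx; inversion Hx; subst.
    + contradiction.
    + auto.
    + apply IHu; [assumption|]; apply (candidate_dred P HP u); assumption.
Qed.

Lemma candidate_inter P Q :
  candidate P -> candidate Q -> candidate (fun t => P (DPr1 t) /\ Q (DPr2 t)).
Proof.
  intros HP HQ; split.
  - intros t [Ht _].
    apply (SN_preimage (@DPr1 Atom)); [intros; constructor; auto|].
    exact (candidate_SN P HP _ Ht).
  - intros t t' [H1 H2] Hr; split;
      [apply (candidate_dred P HP (DPr1 t)) | apply (candidate_dred Q HQ (DPr2 t))];
      auto; constructor; auto.
  - intros t Hn Ht; split;
      [apply (candidate_neutral P HP) | apply (candidate_neutral Q HQ)]; try exact I;
      intros x Hx; inversion Hx; subst; try contradiction.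
    + exact (proj1 (Ht _ ltac:(eassumption))).
    + exact (proj2 (Ht _ ltac:(eassumption))).
Qed.

Lemma candidate_lam P Q s b :
  candidate P -> candidate Q -> SN b ->
  (forall u, P u -> Q (dsubst b 0 u)) -> forall u, P u -> Q (DApp (DLam s b) u).
Proof.
  intros HP HQ Hb; induction Hb as [b _ IHb]; intros Hbody u Hu.
  pose proof (candidate_SN P HP u Hu) as Hsu; revert Hu.
  induction Hsu as [u _ IHu]; intro Hu.
  apply (candidate_neutral Q HQ); [exact I|].
  intros x Hx; inversion Hx; subst.
  - auto.
  - match goal with Hr : dred (DLam _ _) _ |- _ => inversion Hr; subst end.
    apply IHb; auto; intros v Hv.
    apply (candidate_dred Q HQ (dsubst b 0 v)); auto.
    rewrite !dsubst0_scons; apply dred_subst; assumption.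
  - apply IHu; [assumption|]; apply (candidate_dred P HP u); assumption.
Qed.

Lemma candidate_pair P Q a b :
  candidate P -> candidate Q -> P a -> Q b -> P (DPr1 (DPair a b)) /\ Q (DPr2 (DPair a b)).
Proof.
  intros HP HQ Ha Hb.
  pose proof (candidate_SN P HP a Ha) as Sa; revert b Ha Hb.
  induction Sa as [a _ IHa]; intros b Ha Hb.
  pose proof (candidate_SN Q HQ b Hb) as Sb; revert Ha Hb.
  induction Sb as [b _ IHb]; intros Ha Hb.
  split; [apply (candidate_neutral P HP) | apply (candidate_neutral Q HQ)];
    try exact I; intros x Hx; inversion Hx; subst; auto;
    match goal with Hr : dred (DPair _ _) _ |- _ => inversion Hr; subst end.
  - apply (IHa _ ltac:(eassumption) b); auto; eapply (candidate_dred P HP); eauto.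
  - apply IHb; auto; eapply (candidate_dred Q HQ); eauto.
  - apply (IHa _ ltac:(eassumption) b); auto; eapply (candidate_dred P HP); eauto.
  - apply IHb; auto; eapply (candidate_dred Q HQ); eauto.
Qed.

Lemma candidate_coe P a s : candidate P -> SN a -> P (DCoe a s).
Proof.
  intros HP Sa; induction Sa as [a _ IH].
  apply (candidate_neutral P HP); [exact I|].
  intros x Hx; inversion Hx; subst; auto.
Qed.

Fixpoint Red (T : ty) : tm -> Prop :=
  match T with
  | TAtom _ => SN
  | TArr A B => fun t => forall u, Red A u -> Red B (DApp t u)
  | TInt A B => fun t => Red A (DPr1 t) /\ Red B (DPr2 t)
  end.

Lemma candidate_Red T : candidate (Red T).
Proof.
  induction T; simpl.
  - exact candidate_SN_set.
  - apply candidate_arrow; assumption.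
  - apply candidate_inter; assumption.
Qed.

Definition reducible_subst (B : list ty) (sg : nat -> tm) : Prop :=
  forall n T, nth_error B n = Some T -> Red T (sg n).

Lemma reducible_subst_scons B sg T u :
  reducible_subst B sg -> Red T u -> reducible_subst (T :: B) (scons u sg).
Proof. intros Hsg Hu [|n] T' Hn; simpl in *; [injection Hn as <-|]; auto. Qed.

Lemma reducible_subst_var B : reducible_subst B (@DVar Atom).
Proof. intros n T _; apply candidate_var, candidate_Red. Qed.

Lemma typed_Red omega le R B d T :
  typed omega le R B d T ->
  forall sg, reducible_subst B sg -> Red T (subst sg d).
Proof.
  intro H; induction H; intros sg Hsg; simpl.
  - constructor; intros y Hy; inversion Hy.
  - apply Hsg; assumption.
  - intros u Hu.
    apply (candidate_lam _ _ _ _ (candidate_Red s) (candidate_Red t)); auto.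
    + (* The body is SN since instantiating its bound variable by [DVar 0]
         gives a reducible term. *)
      apply (SN_preimage (subst (scons (DVar 0) (@DVar Atom)))).
      { intros; apply dred_subst; assumption. }
      rewrite <- dsubst0_scons, dsubst0_up_subst.
      apply (candidate_SN _ (candidate_Red t)), IHtyped.
      apply reducible_subst_scons; [assumption | apply candidate_var, candidate_Red].
    + intros v Hv; rewrite dsubst0_up_subst.
      apply IHtyped, reducible_subst_scons; assumption.
  - exact (IHtyped1 sg Hsg _ (IHtyped2 sg Hsg)).
  - apply candidate_pair; auto using candidate_Red.
  - exact (proj1 (IHtyped sg Hsg)).
  - exact (proj2 (IHtyped sg Hsg)).
  - apply candidate_coe; [apply candidate_Red|].
    exact (candidate_SN _ (candidate_Red s) _ (IHtyped sg Hsg)).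
Qed.

End StrongNormalization.

Theorem mainTheorem13 :
  forall (Atom : Type) (omega : option Atom) (le : typ Atom -> typ Atom -> Prop),
    is_type_theory le ->
    forall (R : Rchoice) (B : list (typ Atom)) (d : dterm Atom) (s : typ Atom),
      typed omega le R B d s -> strongly_normalizing d.
Proof.
  intros Atom omega le _ R B d s Hd.
  apply SN_strongly_normalizing, (candidate_SN _ _ (candidate_Red Atom s)).
  rewrite <- (subst_id Atom d).
  exact (typed_Red Atom omega le R B d s Hd _ (reducible_subst_var Atom B)).
Qed.
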